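(* Let $n\ge 3$ and let $\mathfrak{M}=(S,\mathcal{L})$ be a $\big(\binom{n+1}{2}_{\,n-1}\ \binom{n+1}{3}_{\,3}\big)$-configuration. Let $X_1\neq X_2$ be $n$-element subsets of $S$ such that $\mathfrak{M}$ freely contains the complete graphs $K_{X_1}$ and $K_{X_2}$ (these are complete graphs of maximal possible size freely contained in $\mathfrak{M}$), and let $Y_i=S\setminus X_i$, $i=1,2$. Then $Y_1\pitchfork Y_2:=(Y_1\cap Y_2)\cup\big((S\setminus Y_1)\cap(S\setminus Y_2)\big)$ is a hyperplane of $\mathfrak{M}$, and there is no set $C\subseteq S$ of pairwise collinear points of $\mathfrak{M}$ with $Y_1\pitchfork Y_2=S\setminus C$; i.e. $Y_1\pitchfork Y_2$ is not the complement of any complete subgraph of $\mathfrak{M}$.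
   Context: A $(v_r\ b_k)$-configuration is a partial linear space with $v$ points and $b$ lines, each point on exactly $r$ lines and each line containing exactly $k$ points. $\mathfrak{M}$ freely contains the complete graph $K_X$ ($X\subseteq S$) iff any two distinct points of $X$ are collinear, no three points of $X$ lie on a line, and for any disjoint $2$-subsets $\{a_1,a_2\},\{b_1,b_2\}$ of $X$ the line through $a_1,a_2$ and the line through $b_1,b_2$ are disjoint. A subspace is a set of points containing every line that meets it in at least two points; a hyperplane is a proper subspace meeting every line. *)

From mathcomp Require Import all_boot.
Set Implicit Arguments. Unset Strict Implicit. Unset Printing Implicit Defensive.

Definition is_configuration (T : finType) (L : {set {set T}}) (v r b k : nat) : Prop :=
  [/\ #|T| = v, #|L| = b,
      (forall p : T, #|[set l in L | p \in l]| = r),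
      (forall l, l \in L -> #|l| = k) &
      (forall l1 l2, l1 \in L -> l2 \in L -> l1 != l2 -> #|l1 :&: l2| <= 1)].

Definition collinear (T : finType) (L : {set {set T}}) (p q : T) : Prop :=
  exists2 l, l \in L & (p \in l) && (q \in l).

Definition freely_contains (T : finType) (L : {set {set T}}) (X : {set T}) : Prop :=
  [/\ (forall a b, a \in X -> b \in X -> a != b -> collinear L a b),
      (forall l, l \in L -> #|l :&: X| <= 2) &
      (forall a1 a2 b1 b2 l1 l2,
          a1 \in X -> a2 \in X -> b1 \in X -> b2 \in X ->
          a1 != a2 -> b1 != b2 -> [disjoint [set a1; a2] & [set b1; b2]] ->
          l1 \in L -> l2 \in L -> a1 \in l1 -> a2 \in l1 -> b1 \in l2 -> b2 \in l2 ->
          [disjoint l1 & l2])].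

Definition subspace (T : finType) (L : {set {set T}}) (A : {set T}) : Prop :=
  forall l, l \in L -> 2 <= #|l :&: A| -> l \subset A.

Definition hyperplane (T : finType) (L : {set {set T}}) (A : {set T}) : Prop :=
  [/\ subspace L A, A != setT & (forall l, l \in L -> l :&: A != set0)].

Definition pitchfork (T : finType) (Y1 Y2 : {set T}) : {set T} :=
  (Y1 :&: Y2) :|: (~: Y1 :&: ~: Y2).

Definition pairwise_collinear (T : finType) (L : {set {set T}}) (C : {set T}) : Prop :=
  forall a b, a \in C -> b \in C -> a != b -> collinear L a b.

From mathcomp Require Import all_boot.

Set Implicit Arguments.
Unset Strict Implicit.
Unset Printing Implicit Defensive.

(* In such a configuration every point lies on n - 1 lines, so a point x of a
   freely contained n-set X is joined to the n - 1 other points of X by all the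
   lines through it: every line meets X in 0 or 2 points.  Hence the symmetric
   difference D of X1 and X2 meets every line in an even number of points, and
   since lines have 3 points its complement, which is Y1 ⋔ Y2, is a hyperplane.
   Two lines through a point b outside X that both meet X would carry disjoint
   pairs of X, so freeness puts all points of X collinear with b on a single
   line.  If D were a clique, a point b of X2 \ X1 would be collinear with all
   of X1 (with X1 ∩ X2 inside X2 and with X1 \ X2 inside D), forcing n <= 2. *)

Section Configuration.
Variables (T : finType) (L : {set {set T}}) (v r m k : nat).

Definition join (x y : T) : {set T} :=
  odflt set0 [pick l in L | (x \in l) && (y \in l)].

Lemma joinP x y :
  collinear L x y -> [/\ join x y \in L, x \in join x y & y \in join x y].
Proof.
rewrite /join; case: pickP => [l /andP[lL /andP[xl yl]] | none] // [l lL xyl].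
by have := none l; rewrite lL xyl.
Qed.

Hypothesis HL : is_configuration L v r m k.

Lemma configuration_line_uniq l1 l2 p q :
  l1 \in L -> l2 \in L -> p != q ->
  p \in l1 -> q \in l1 -> p \in l2 -> q \in l2 -> l1 = l2.
Proof.
case: HL => _ _ _ _ Hpls l1L l2L pq pl1 ql1 pl2 ql2.
apply/eqP; apply: contraT => l12.
have : 1 < #|l1 :&: l2|.
  by apply/card_gt1P; exists p, q; rewrite !inE pl1 ql1 pl2 ql2.
by rewrite ltnNge Hpls.
Qed.

End Configuration.

Section FreeCompleteGraph.
Variables (T : finType) (L : {set {set T}}) (v n m : nat).
Hypothesis HL : is_configuration L v n.-1 m 3.
Variable X : {set T}.
Hypotheses (HX : #|X| = n) (HF : freely_contains L X).

Lemma free_no_three_on_line l : l \in L -> #|l :&: X| <= 2.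
Proof. by case: HF => _ H _; apply: H. Qed.

(* The lines joining x to the other points of X are pairwise distinct and as
   many as the lines through x, so they exhaust them. *)
Lemma free_line_meets_again l x : l \in L -> x \in l -> x \in X ->
  exists2 y, y \in l :&: X & y != x.
Proof.
move=> lL xl xX; case: HL => _ _ Hr _ _; case: (HF) => Hcol _ _.
have joinX y :
    y \in X :\ x -> [/\ join L x y \in L, x \in join L x y & y \in join L x y].
  by rewrite in_setD1 => /andP[yx yX]; apply/joinP/Hcol; rewrite // eq_sym.
have join_inj : {in X :\ x &, injective (join L x)}.
  move=> y z yXx zXx Eyz; apply/eqP; apply: contraT => yz.
  have [jL xj yj] := joinX y yXx; have [_ _ zj] := joinX z zXx.
  move: yXx zXx; rewrite -Eyz in zj; rewrite !in_setD1 => /andP[yx yX] /andP[zx zX].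
  have : 2 < #|join L x y :&: X|.
    by apply/card_gt2P; exists x, y, z; rewrite !inE xj yj zj xX yX zX eq_sym yx yz zx.
  by rewrite ltnNge free_no_three_on_line.
have joins_sub : join L x @: (X :\ x) \subset [set l in L | x \in l].
  by apply/subsetP=> _ /imsetP[y yXx ->]; have [jL xj _] := joinX y yXx; rewrite inE jL.
have joins_card : #|join L x @: (X :\ x)| = #|[set l in L | x \in l]|.
  by rewrite card_in_imset // Hr -HX (cardsD1 x X) xX.
have : l \in join L x @: (X :\ x).
  by rewrite (subset_cardP joins_card joins_sub) inE lL xl.
case/imsetP=> y yXx ->; have [_ _ yj] := joinX y yXx.
by move: yXx; rewrite in_setD1 => /andP[yx yX]; exists y; rewrite // inE yj.
Qed.

Lemma free_line_meets_even l : l \in L -> ~~ odd #|l :&: X|.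
Proof.
move=> lL; have le2 := free_no_three_on_line lL.
have [/eqP -> | /set0Pn[x /setIP[xl xX]]] := boolP (l :&: X == set0).
  by rewrite cards0.
have [y yl yx] := free_line_meets_again lL xl xX.
have : 1 < #|l :&: X| by apply/card_gt1P; exists y, x; rewrite yl inE xl xX.
by case: #|l :&: X| le2 => [|[|[|]]].
Qed.

(* The two pairs of X on two distinct lines through b are disjoint, so
   freeness makes the lines disjoint, yet both contain b. *)
Lemma free_lines_through_outside b l1 l2 x1 x2 :
  b \notin X -> l1 \in L -> l2 \in L -> b \in l1 -> b \in l2 ->
  x1 \in l1 :&: X -> x2 \in l2 :&: X -> l1 = l2.
Proof.
move=> bX l1L l2L bl1 bl2 /setIP[x1l1 x1X] /setIP[x2l2 x2X].
have [y1 /setIP[y1l1 y1X] y1x1] := free_line_meets_again l1L x1l1 x1X.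
have [y2 /setIP[y2l2 y2X] y2x2] := free_line_meets_again l2L x2l2 x2X.
apply/eqP; apply: contraT => l12.
have pairs_disj : [disjoint [set y1; x1] & [set y2; x2]].
  rewrite -setI_eq0; apply: contraT => /set0Pn[u /setIP[u1 u2]].
  have [ul1 uX] : u \in l1 /\ u \in X by move: u1; rewrite !inE => /orP[]/eqP->.
  have [ul2 _] : u \in l2 /\ u \in X by move: u2; rewrite !inE => /orP[]/eqP->.
  have bu : b != u by apply: contraNneq bX => ->.
  by rewrite (configuration_line_uniq HL l1L l2L bu bl1 ul1 bl2 ul2) eqxx in l12.
case: HF => _ _ Hdisj.
have := Hdisj _ _ _ _ _ _ y1X x1X y2X x2X y1x1 y2x2 pairs_disj
  l1L l2L y1l1 x1l1 y2l2 x2l2.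
by move/disjointFr/(_ bl1); rewrite bl2.
Qed.

Lemma free_card_le2_of_outside_collinear b :
  b \notin X -> {in X, forall x, collinear L b x} -> #|X| <= 2.
Proof.
move=> bX bcol; have [-> | [x0 x0X]] := set_0Vmem X; first by rewrite cards0.
have [l0L bl0 x0l0] := joinP (bcol x0 x0X).
suff /setIidPr <- : X \subset join L b x0 by apply: free_no_three_on_line.
apply/subsetP=> x xX; have [lL bl xl] := joinP (bcol x xX).
rewrite -(free_lines_through_outside bX lL l0L bl bl0 (x1 := x) (x2 := x0)) //.
  by rewrite inE xl.
by rewrite inE x0l0.
Qed.

End FreeCompleteGraph.

Lemma pitchforkCC (T : finType) (X1 X2 : {set T}) :
  pitchfork (~: X1) (~: X2) = ~: (X1 :\: X2 :|: X2 :\: X1).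
Proof.
by apply/setP=> x; rewrite !inE; case: (x \in X1); case: (x \in X2).
Qed.

Lemma odd_card_setI_symdiff (T : finType) (A X1 X2 : {set T}) :
  odd #|A :&: (X1 :\: X2 :|: X2 :\: X1)| = odd #|A :&: X1| (+) odd #|A :&: X2|.
Proof.
rewrite -(cardsID X2 (A :&: X1)) -(cardsID X1 (A :&: X2)).
rewrite -(cardsID X1 (A :&: (X1 :\: X2 :|: X2 :\: X1))).
have -> : A :&: X2 :&: X1 = A :&: X1 :&: X2 by rewrite setIAC.
have -> : A :&: (X1 :\: X2 :|: X2 :\: X1) :&: X1 = A :&: X1 :\: X2.
  by apply/setP=> x; rewrite !inE; case: (x \in A); case: (x \in X1); case: (x \in X2).
have -> : A :&: (X1 :\: X2 :|: X2 :\: X1) :\: X1 = A :&: X2 :\: X1.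
  by apply/setP=> x; rewrite !inE; case: (x \in A); case: (x \in X1); case: (x \in X2).
by rewrite !oddD addbACA addbb.
Qed.

Lemma hyperplane_setC_even (T : finType) (L : {set {set T}}) (D : {set T}) :
  (forall l, l \in L -> #|l| = 3) -> D != set0 ->
  (forall l, l \in L -> ~~ odd #|l :&: D|) -> hyperplane L (~: D).
Proof.
move=> Hl D0 Deven.
have card_lineC l : l \in L -> #|l :&: ~: D| = 3 - #|l :&: D|.
  by move=> lL; rewrite -setDE -(Hl l lL) -(cardsID D l) addKn.
have lineD l : l \in L -> #|l :&: D| = 0 \/ #|l :&: D| = 2.
  move=> lL; have := subset_leq_card (subsetIl l D); rewrite (Hl l lL) => le3.
  by move: (Deven l lL) le3; case: #|l :&: D| => [|[|[|[|]]]]; auto.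
split.
- move=> l lL; rewrite card_lineC //; case: (lineD l lL) => [lD0 _ | -> //].
  by rewrite -disjoints_subset -setI_eq0 -cards_eq0 lD0.
- by rewrite -setC0 (inj_eq (@setC_inj _)).
- by move=> l lL; rewrite -cards_eq0 card_lineC //; case: (lineD l lL) => ->.
Qed.

Theorem proposition1p8 (n : nat) (T : finType) (L : {set {set T}}) :
  3 <= n ->
  is_configuration L 'C(n.+1, 2) n.-1 'C(n.+1, 3) 3 ->
  forall X1 X2 : {set T},
    X1 != X2 -> #|X1| = n -> #|X2| = n ->
    freely_contains L X1 -> freely_contains L X2 ->
    hyperplane L (pitchfork (~: X1) (~: X2)) /\
    ~ (exists C : {set T}, pairwise_collinear L C /\
                           pitchfork (~: X1) (~: X2) = ~: C).
Proof.
move=> n3 HL X1 X2 X12 H1 H2 F1 F2.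
rewrite pitchforkCC; set D := _ :|: _.
have [b bX2 bX1] : exists2 b, b \in X2 & b \notin X1.
  by apply/subsetPn; apply: contra X12 => X21; rewrite eq_sym eqEcard X21 H1 H2 /=.
have bD : b \in D by rewrite !inE bX2 bX1.
split.
  apply: hyperplane_setC_even => [l lL | | l lL]; first by case: HL => _ _ _ ->.
    by apply/set0Pn; exists b.
  by rewrite odd_card_setI_symdiff !(negbTE (free_line_meets_even HL _ _ lL)).
move=> [C [HC /setC_inj DC]].
suff : #|X1| <= 2 by rewrite H1 leqNgt n3.
apply: (free_card_le2_of_outside_collinear HL H1 F1 bX1) => x xX1.
have bx : b != x by apply: contraNneq bX1 => ->.
have [xX2 | xX2] := boolP (x \in X2); first by case: F2 => Hcol _ _; apply: Hcol.
by apply: HC bx; rewrite -DC // !inE xX1 xX2.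
Qed.
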